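(* Let $X$ be a complete metric space, $f : X \to X$ a continuous map and $x \in X$. Then the following are equivalent: (i) The map $f{\uparrow}_x : \mathbb{N} \to X$, $n \mapsto f^n(x)$, can be extended to a continuous map $\widehat{f{\uparrow}_x} : \widehat{\mathbb{N}} \to X$. (ii) For every $s \in \widehat{\mathbb{Z}}$ and every sequence of positive integers $(n_i)_{i \in \mathbb{N}}$ with $n_i \to +\infty$ in $\mathbb{R}$ and $\widehat{n_i} \to s$ in $\widehat{\mathbb{Z}}$ as $i \to \infty$, the limit $\lim_{i \to \infty} f^{n_i}(x)$ exists in $X$ and depends only on $s$.
   Context: $\mathbb{N} = \{1,2,3,\dots\}$, $f^n$ is the $n$-th iterate of $f$, $\widehat{\mathbb{Z}} = \varprojlim_n \mathbb{Z}/n\mathbb{Z}$, and $\widehat{\cdot}:\mathbb{N} \to \widehat{\mathbb{Z}}$ is the natural embedding. $\widehat{\mathbb{N}}$ is the profinite completion of $(\mathbb{N},+)$: the projective limit (with projective limit topology, each term discrete) of the finite semigroups $\mathbb{Z}_{m,n}$ with underlying set $\{1,\dots,m-1\} \sqcup \mathbb{Z}/n\mathbb{Z}$ and quotient maps $\pi_{m,n}:\mathbb{N} \to \mathbb{Z}_{m,n}$ ($a \mapsto a$ if $a<m$, $a \mapsto a \bmod n$ if $a\ge m$). As a set $\widehat{\mathbb{N}} = \mathbb{N} \sqcup \widehat{\mathbb{Z}}$, $\mathbb{N}$ embeds via $n \mapsto (\pi_{m,n}(n))$, and a sequence of positive integers $(n_i)$ converges to $s \in \widehat{\mathbb{Z}}$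 in $\widehat{\mathbb{N}}$ iff $n_i \to \infty$ in $\mathbb{R}$ and $\widehat{n_i} \to s$ in $\widehat{\mathbb{Z}}$. *)

From HB Require Import structures.
From mathcomp Require Import all_boot all_order all_algebra.
From mathcomp Require Import all_classical all_reals all_analysis.

Set Implicit Arguments.
Unset Strict Implicit.
Unset Printing Implicit Defensive.

Import Order.TTheory GRing.Theory Num.Theory.
Local Open Scope classical_set_scope.

(* Profinite integers  Zhat = lim_n Z/nZ  (n >= 1).                          *)
(* An element is a compatible family (a k)_k where a k is the residue in     *)
(* Z/(k+1)Z, represented by a natural number < k+1; compatibility: for       *)
(* (d+1) | (m+1), a m mod (d+1) = a d.                                       *)
Definition zhat_compat (a : nat -> nat) : Prop :=
  (forall k, a k < k.+1) /\
  (forall d m, d.+1 %| m.+1 -> a m %% d.+1 = a d).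

Definition zhat_set := {a : nat -> nat | zhat_compat a}.
HB.instance Definition _ := gen_eqMixin zhat_set.
HB.instance Definition _ := gen_choiceMixin zhat_set.

Definition zhat_val (s : zhat_set) : {ptws nat -> nat} := proj1_sig s.

(* Projective limit topology = initial topology w.r.t. all projections to the
   discrete Z/(k+1)Z, i.e. induced by the product of discrete spaces. *)
Definition Zhat := initial_topology zhat_val.

Lemma zhat_of_nat_compat (n : nat) : zhat_compat (fun k => n %% k.+1).
Proof. by split=> [k|d m dm]; [rewrite ltn_mod | rewrite modn_dvdm]. Qed.

Definition zhat_of_nat (n : nat) : Zhat :=
  exist _ (fun k => n %% k.+1) (zhat_of_nat_compat n).

(* Nhat = N |_| Zhat, with N = {1,2,3,...}.                                  *)
(* CONVENTION: [nh_nat k] denotes the positive integer k.+1.                 *)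
Inductive nhat_set := nh_nat of nat | nh_inf of Zhat.
HB.instance Definition _ := gen_eqMixin nhat_set.
HB.instance Definition _ := gen_choiceMixin nhat_set.

(* The quotient map pi_{m,n} : Nhat -> Z_{m,n}, for m = i.+1, n = j.+1.
   Z_{m,n} = {1,..,m-1} |_| Z/nZ is encoded injectively in nat:
   a in {1,..,m-1} |-> a,   residue r in Z/nZ |-> m + r. *)
Definition pi_mn (ij : nat * nat) (p : nhat_set) : nat :=
  let m := ij.1.+1 in let n := ij.2.+1 in
  match p with
  | nh_nat k => if k.+1 < m then k.+1 else m + k.+1 %% n
  | nh_inf s => m + proj1_sig s ij.2
  end.

Definition nhat_proj (p : nhat_set) : {ptws (nat * nat) -> nat} :=
  fun ij => pi_mn ij p.

Definition Nhat := initial_topology nhat_proj.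

From HB Require Import structures.
From mathcomp Require Import all_boot all_order all_algebra.
From mathcomp Require Import all_classical all_reals all_analysis.
From mathcomp Require Import zify.

Set Implicit Arguments.
Unset Strict Implicit.
Unset Printing Implicit Defensive.

Import Order.TTheory GRing.Theory Num.Theory.
Local Open Scope classical_set_scope.
Local Open Scope ring_scope.

(* In Nhat the positive integers are isolated points, and a sequence of positive
   integers tends to s in Zhat as soon as it tends to +oo in R and to s in Zhat;
   so (i) gives (ii) by continuity, with l = F(s). Conversely, extend
   n |-> f^n(x) by the limits l(s). The extension is continuous at the
   integers; at s it is continuous by a sequential argument: every point of a
   basic cylinder around s is approximated, in value, by a positive integer of
   the same cylinder, so points with far values in ever smaller cylinders would
   yield integers tending to s whose iterates stay away from l(s). *)

Lemma cvg_initialP {S : choiceType} {T : topologicalType} (g : S -> T)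
    (G : set_system S) (p : S) : Filter G ->
  G --> (p : initial_topology g) <-> g @ G --> g p.
Proof.
move=> FG; split=> [Gp|gGp A].
  exact: cvg_comp Gp (@initial_continuous _ _ g p).
rewrite (@nbhsE (initial_topology g)) => -[B [[C oC <-] Cp] BA].
exact: filterS BA (gGp _ (open_nbhs_nbhs _)).
Qed.

Lemma cvg_initial_ptws_natP {S : choiceType} {K : topologicalType}
    (g : S -> {ptws K -> nat}) (G : set_system S) (p : S) : Filter G ->
  G --> (p : initial_topology g) <-> forall k, \forall q \near G, g q k = g p k.
Proof.
move=> FG; rewrite cvg_initialP pointwise_cvgP.
split=> h k; first by have /(@discrete_cvg nat) := h k; apply.
by apply/(@discrete_cvg nat); apply: h.
Qed.

Lemma cvg_zhat_of_natP (G : set_system nat) (t : Zhat) (u : nat -> nat) :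
  Filter G -> zhat_of_nat (u K) @[K --> G] --> t <->
  forall j, \forall K \near G, (u K %% j.+1)%N = sval t j.
Proof. by move=> FG; rewrite cvg_initial_ptws_natP. Qed.

Lemma cvg_nhatP (G : set_system Nhat) (p : Nhat) : Filter G ->
  G --> p <-> forall ij, \forall q \near G, pi_mn ij q = pi_mn ij p.
Proof. exact: cvg_initial_ptws_natP. Qed.

Lemma nbhs_pi_mn (ij : nat * nat) (p : Nhat) :
  nbhs p [set q : Nhat | pi_mn ij q = pi_mn ij p].
Proof. by have /cvg_nhatP := @cvg_id _ (nbhs p); apply. Qed.

Lemma nbhs_nh_nat (k : nat) : nbhs (nh_nat k : Nhat) [set nh_nat k].
Proof.
apply: filterS (nbhs_pi_mn (k.+1, 0) _) => -[k'|t]; rewrite /pi_mn /= ltnSn.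
  by case: ltnP => [_ [->] | _ ?] //; exfalso; lia.
by move=> ?; exfalso; lia.
Qed.

Definition nhat_cylinder (N : nat) (p : Nhat) : set Nhat :=
  [set q | forall j, (j < N)%N -> pi_mn (N, j) q = pi_mn (N, j) p].

Lemma nbhs_nhat_cylinder (N : nat) (p : Nhat) : nbhs p (nhat_cylinder N p).
Proof.
have : \forall q \near p, forall j : 'I_N, pi_mn (N, val j) q = pi_mn (N, val j) p.
  exact: filter_forall (fun j : 'I_N => nbhs_pi_mn (N, val j) p).
by apply: filterS => q qp j jN; apply: (qp (Ordinal jN)).
Qed.

Lemma nhat_cylinder_trans (N : nat) (p q r : Nhat) :
  nhat_cylinder N p q -> nhat_cylinder N q r -> nhat_cylinder N p r.
Proof. by move=> pq qr j jN; rewrite qr ?pq. Qed.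

Lemma nhat_cylinder_nh_inf (N v : nat) (s : Zhat) :
  nhat_cylinder N.+1 (nh_inf s) (nh_nat v) ->
  (N <= v)%N /\ forall j, (j <= N)%N -> (v.+1 %% j.+1)%N = sval s j.
Proof.
rewrite /nhat_cylinder /pi_mn /= => sv.
have Nv : (N <= v)%N by have := sv 0%N isT; case: ltnP; lia.
by split=> // j jN; have := sv j jN; case: ltnP => [vN | _]; [lia | move/addnI].
Qed.

Lemma cvg_nh_inf (R : realType) (u : nat -> nat) (s : Zhat) :
  ((u i)%:R : R) @[i --> \oo] --> +oo ->
  zhat_of_nat (u i) @[i --> \oo] --> s ->
  (nh_nat (u i).-1 : Nhat) @[i --> \oo] --> (nh_inf s : Nhat).
Proof.
move=> u_cvgy /cvg_zhat_of_natP u_cvgs; apply/cvg_nhatP => -[a b].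
have a_lt_u : \forall i \near \oo, (a < u i)%N.
  by apply: filterS (cvgry_ge u_cvgy a.+1%:R) => i; rewrite ler_nat.
suff : \forall i \near \oo, pi_mn (a, b) (nh_nat (u i).-1) = pi_mn (a, b) (nh_inf s)
  by [].
near=> i; have a_u : (a < u i)%N by near: i.
rewrite /pi_mn /= prednK; last exact: leq_ltn_trans a_u.
by rewrite ltnNge a_u /=; congr (_ + _)%N; near: i; apply: u_cvgs.
Unshelve. all: end_near.
Qed.

Lemma cvgy_natr_ge_id (R : realType) (u : nat -> nat) :
  (forall K, (K <= u K)%N) -> ((u K)%:R : R) @[K --> \oo] --> +oo.
Proof.
by move=> u_ge; apply: (ger_cvgy _ cvgr_idn); apply: nearW => K; rewrite ler_nat.
Qed.

Lemma cvg_zhat_of_nat_approx (t : Zhat) (u : nat -> nat) :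
  (forall K j, (j < K)%N -> (u K %% j.+1)%N = sval t j) ->
  zhat_of_nat (u K) @[K --> \oo] --> t.
Proof.
move=> u_mod; apply/cvg_zhat_of_natP => j.
by apply: filterS (nbhs_infty_ge j.+1) => K; apply: u_mod.
Qed.

(* [sval t (K`! - 1)] represents [t] modulo every divisor of [K`!], hence modulo
   every [j.+1 <= K]; adding [K`! * K.+1] keeps these residues and exceeds [K]. *)
Lemma zhat_nat_approx (t : Zhat) : exists w : nat -> nat,
  (forall K, (K < w K)%N) /\
  (forall K j, (j < K)%N -> (w K %% j.+1)%N = sval t j).
Proof.
exists (fun K => sval t (K`!.-1) + K`! * K.+1)%N; split.
  by move=> K; have := fact_gt0 K; nia.
move=> K j jK; have jK_dvd : (j.+1 %| K`!)%N by apply: dvdn_fact; lia.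
rewrite -modnDm (eqP (dvdn_mulr K.+1 jK_dvd)) addn0 modn_mod.
by apply: (proj2 (proj2_sig t)); rewrite prednK ?fact_gt0.
Qed.

Section NhatExtension.
Variables (R : realType) (X : pseudoMetricType R) (f : X -> X) (x : X).
Variable L : Zhat -> X.
Hypothesis iter_cvgL : forall (s : Zhat) (u : nat -> nat),
  (forall i, (0 < u i)%N) ->
  ((u i)%:R : R) @[i --> \oo] --> +oo ->
  zhat_of_nat (u i) @[i --> \oo] --> s ->
  iter (u i) f x @[i --> \oo] --> L s.

Definition nhat_ext (p : Nhat) : X :=
  match p with nh_nat k => iter k.+1 f x | nh_inf s => L s end.

Let iter_cvg_approx (t : Zhat) (w : nat -> nat) :
  (forall K, (K < w K)%N) ->
  (forall K j, (j < K)%N -> (w K %% j.+1)%N = sval t j) ->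
  iter (w K) f x @[K --> \oo] --> L t.
Proof.
move=> w_gt w_mod; have w_gt0 K : (0 < w K)%N by apply: leq_ltn_trans (w_gt K).
have w_cvgy : ((w K)%:R : R) @[K --> \oo] --> +oo.
  by apply: cvgy_natr_ge_id => K; apply: ltnW.
exact: iter_cvgL w_gt0 w_cvgy (cvg_zhat_of_nat_approx w_mod).
Qed.

Lemma nhat_ext_approx (q : Nhat) (N : nat) (e : R) : 0 < e ->
  exists v, nhat_cylinder N q (nh_nat v) /\ ball (nhat_ext q) e (iter v.+1 f x).
Proof.
case: q => [k|t] e_gt0; first by exists k; split=> //; apply: ballxx.
have [w [w_gt w_mod]] := zhat_nat_approx t.
have w_cvgy : ((w K)%:R : R) @[K --> \oo] --> +oo.
  by apply: cvgy_natr_ge_id => K; apply: ltnW.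
have w_cvg := cvg_nh_inf w_cvgy (cvg_zhat_of_nat_approx w_mod).
have iter_cvg := iter_cvg_approx w_gt w_mod.
near \oo => K; exists (w K).-1; rewrite prednK; last exact: leq_ltn_trans (w_gt K).
split; near: K; first by apply: w_cvg; apply: nbhs_nhat_cylinder.
by apply: iter_cvg; apply: nbhsx_ballx.
Unshelve. all: end_near.
Qed.

Lemma continuous_nhat_ext : continuous nhat_ext.
Proof.
case=> [k|s] A /= A_nbhs.
  by apply: filterS (nbhs_nh_nat k) => _ ->; apply: nbhs_singleton.
have /nbhs_ballP[e e_gt0 eA] := A_nbhs.
apply: contrapT => notA; have e2_gt0 : 0 < e / 2 by rewrite divr_gt0.
have far N : exists v, [/\ (N < v)%N,
    forall j, (j <= N)%N -> (v %% j.+1)%N = sval s j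
  & ~ ball (L s) (e / 2) (iter v f x)].
  have [q sq qA] : exists2 q, nhat_cylinder N.+1 (nh_inf s) q & ~ A (nhat_ext q).
    apply: contrapT => /forall2NP qA; apply: notA.
    apply: filterS (nbhs_nhat_cylinder N.+1 _) => q sq.
    by case: (qA q) => // /contrapT.
  have [v [qv v_near]] := nhat_ext_approx q N.+1 e2_gt0.
  have [Nv v_mod] := nhat_cylinder_nh_inf (nhat_cylinder_trans sq qv).
  exists v.+1; split=> // v_close; apply/qA/eA.
  by rewrite [e]splitr; apply: ball_triangle v_close (ball_sym v_near).
have [V /all_and3[V_gt V_mod V_far]] := choice far.
have := iter_cvg_approx V_gt (fun K j jK => V_mod K j (ltnW jK)).
move=> /(_ _ (nbhsx_ballx _ _ e2_gt0)) [K0 _ /(_ K0 (leqnn _))].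
exact: V_far.
Qed.

End NhatExtension.

Theorem corollary2p3 (R : realType) (X : completePseudoMetricType R)
    (X_hausdorff : hausdorff_space X)
    (f : X -> X) (f_cont : continuous f) (x : X) :
  (exists F : Nhat -> X, continuous F /\
     forall k : nat, F (nh_nat k) = iter k.+1 f x)
  <->
  (forall s : Zhat, exists l : X,
     forall u : nat -> nat,
       (forall i, (0 < u i)%N) ->
       ((u i)%:R : R) @[i --> \oo] --> +oo%R ->
       zhat_of_nat (u i) @[i --> \oo] --> s ->
       iter (u i) f x @[i --> \oo] --> l).
Proof.
split=> [[F [F_cont F_nat]] s | /choice[L iter_cvgL]].
  exists (F (nh_inf s)) => u u_gt0 u_cvgy u_cvgs.
  have -> : (fun i => iter (u i) f x) = F \o (fun i => nh_nat (u i).-1).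
    by apply: funext => i /=; rewrite F_nat prednK.
  exact: cvg_comp (cvg_nh_inf u_cvgy u_cvgs) (F_cont _).
by exists (nhat_ext f x L); split=> //; apply: continuous_nhat_ext.
Qed.
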